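(* Let $\mathbf z_1,\dots,\mathbf z_d\in\mathbb Z^d$ be a basis of $\mathbb Z^d$. Then for each $\boldsymbol\alpha\in\mathfrak S_2$ we have \[\frac{1}{D_{2,d-1}B_1^{d-1}}\Big(1-\frac{1}{2B_1B_2}\Big)\leq|L_{\boldsymbol\alpha}(\mathbf z_1)|\cdot|\underline{\mathbf z_1}|^{d-1}\leq\frac{1}{D_{2,d-1}B_1^{d-1}}\Big(1+\frac{1}{2B_1B_2}\Big).\]
   Context: Let $d\geq2$. $|\cdot|$ is the Euclidean norm, $\langle\cdot,\cdot\rangle$ the standard inner product. For $\mathbf x=(x_1,\dots,x_d)\in\mathbb R^d$ write $\underline{\mathbf x}=(x_1,\dots,x_{d-1})$. Let $\pi_d=\{\mathbf x\in\mathbb R^d:x_d=1\}$ and $L_{\boldsymbol\alpha}(\mathbf x)=\langle\boldsymbol\alpha,\mathbf x\rangle$ for $\boldsymbol\alpha\in\pi_d$. For given vectors $\mathbf z_1,\mathbf z_2,\dots$: $\det\underline\Lambda_{k,l}=|\underline{\mathbf z_k}\wedge\dots\wedge\underline{\mathbf z_{k+l-1}}|$ ($1\le l\le d-1$); $D_{k,l}=\det\underline\Lambda_{k,l}/|\underline{\mathbf z_k}|^l$; $B_k=|\underline{\mathbf z_{k+1}}|/|\underline{\mathbf z_k}|$; $R_k=1/(2|\underline{\mathbf z_{k+1}}|\det\underline\Lambda_{k,d-1})$; when $\underline{\mathbf z_k},\dots,\underline{\mathbf z_{k+d-2}}$ are linearly independent, $\boldsymbol\alpha_k$ is the unique point of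 $\pi_d$ orthogonal to $\mathbf z_k,\dots,\mathbf z_{k+d-2}$ and $\mathfrak S_k=\{\mathbf x\in\pi_d:|\mathbf x-\boldsymbol\alpha_k|\le R_k\}$. In the claim, $B_2$ and $R_2$ involve a vector $\mathbf z_3$ (with $\mathbf z_3$ among $\mathbf z_1,\dots,\mathbf z_d$ when $d\ge3$; when $d=2$ an additional vector $\mathbf z_3\in\mathbb Z^d$ is assumed given); whenever $\boldsymbol\alpha_k$ or $\mathfrak S_k$ appears it is implicitly assumed well defined. *)

From mathcomp Require Import all_boot all_order all_algebra.
From mathcomp Require Import reals.
Set Implicit Arguments. Unset Strict Implicit. Unset Printing Implicit Defensive.
Import Order.TTheory GRing.Theory Num.Theory.
Local Open Scope ring_scope.

(* Throughout, d = n.+1 (so d >= 2 iff n >= 1); vectors of R^d are 'rV[R]_(n.+1). *)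
Section Defs.
Variable R : realType.
Variable n : nat.

Definition dotp m (x y : 'rV[R]_m) : R := \sum_(i < m) x 0 i * y 0 i.
Definition enorm m (x : 'rV[R]_m) : R := Num.sqrt (dotp x x).

Definition ul (x : 'rV[R]_n.+1) : 'rV[R]_n :=
  \row_(i < n) x 0 (widen_ord (leqnSn n) i).

Definition on_pi (x : 'rV[R]_n.+1) : Prop := x 0 ord_max = 1.

Definition Lf (a x : 'rV[R]_n.+1) : R := dotp a x.

Variable z : nat -> 'rV[R]_n.+1.

Definition ulmx (k l : nat) : 'M[R]_(l, n) := \matrix_(i < l) ul (z (k + i)).

(* det Lambda_{k,l} = | ul z_k /\ ... /\ ul z_{k+l-1} | (Gram determinant) *)
Definition detLam (k l : nat) : R :=
  Num.sqrt (\det (ulmx k l *m (ulmx k l)^T)).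

Definition Dkl (k l : nat) : R := detLam k l / enorm (ul (z k)) ^+ l.
Definition Bk (k : nat) : R := enorm (ul (z k.+1)) / enorm (ul (z k)).
Definition Rk (k : nat) : R := (2 * enorm (ul (z k.+1)) * detLam k n)^-1.

(* alpha_k is well defined: ul z_k, ..., ul z_{k+d-2} linearly independent *)
Definition alpha_wd (k : nat) : Prop := row_free (ulmx k n).

(* a is a point of pi_d orthogonal to z_k, ..., z_{k+d-2}
   (under alpha_wd k, this characterizes alpha_k uniquely) *)
Definition is_alpha (k : nat) (a : 'rV[R]_n.+1) : Prop :=
  on_pi a /\ forall i : 'I_n, dotp a (z (k + i)) = 0.

Definition in_frakS (k : nat) (ak x : 'rV[R]_n.+1) : Prop :=
  on_pi x /\ enorm (x - ak) <= Rk k.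

End Defs.

Definition zR (R : realType) n (zi : nat -> 'rV[int]_n.+1) (k : nat) : 'rV[R]_n.+1 :=
  map_mx (fun c : int => c%:~R) (zi k).

(* z_1, ..., z_d is a basis of Z^d: the integer matrix with these rows is unimodular *)
Definition Zbasis n (zi : nat -> 'rV[int]_n.+1) : Prop :=
  (\matrix_(i < n.+1) zi i.+1) \in unitmx.

From mathcomp Require Import all_boot all_order all_algebra.
From mathcomp Require Import reals.
From mathcomp Require Import ring lra.
Set Implicit Arguments. Unset Strict Implicit. Unset Printing Implicit Defensive.
Import Order.TTheory GRing.Theory Num.Theory.
Local Open Scope ring_scope.

(* Let Z be the unimodular matrix with rows z_1, ..., z_d.  As alpha_2 has last
   coordinate 1 and is orthogonal to z_2, ..., z_d, the vector alpha_2 Z^T is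
   (L_{alpha_2}(z_1), 0, ..., 0); reading off the last coordinate of
   alpha_2 Z^T adj(Z)^T = det Z alpha_2 gives
   1 = |det Z| = |L_{alpha_2}(z_1)| det Lambda_{2,d-1}.
   For alpha in S_2, alpha - alpha_2 has last coordinate 0, so Cauchy-Schwarz
   gives |L_alpha(z_1) - L_{alpha_2}(z_1)| <= R_2 |ul z_1|, and
   R_2 |ul z_1| det Lambda_{2,d-1} is exactly 1 / (2 B_1 B_2). *)

Lemma det_cofactor_orthogonal (F : comPzRingType) n (A : 'M[F]_n.+1)
    (a : 'rV[F]_n.+1) :
  a 0 ord_max = 1 -> (forall i, i != ord0 -> (a *m A^T) 0 i = 0) ->
  \det A = cofactor A ord0 ord_max * (a *m A^T) 0 ord0.
Proof.
move=> a_max a_orth.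
have := congr1 (fun M : 'M_n.+1 => (a *m M^T) 0 ord_max) (mul_adj_mx A).
rewrite /= trmx_mul mulmxA tr_scalar_mx mul_mx_scalar !mxE a_max mulr1 => <-.
rewrite big_ord_recl big1 ?addr0 => [|i _]; last by rewrite a_orth ?mul0r.
by rewrite !mxE mulrC.
Qed.

Lemma unitmx_norm_det_intr (R : numDomainType) m (A : 'M[int]_m) :
  A \in unitmx -> `|\det (map_mx intr A)| = 1 :> R.
Proof.
rewrite unitmxE (det_map_mx (intr : {rmorphism int -> R})).
by case/orP => /eqP ->; rewrite ?rmorphN rmorph1 ?normrN normr1.
Qed.

Section Dot.
Variable R : realType.

Lemma dotp_ge0 m (x : 'rV[R]_m) : 0 <= dotp x x.
Proof. by rewrite sumr_ge0 // => i _; rewrite -expr2 sqr_ge0. Qed.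

Lemma dotpBl m (x y w : 'rV[R]_m) : dotp (x - y) w = dotp x w - dotp y w.
Proof. by rewrite /dotp -sumrB; apply: eq_bigr => i _; rewrite !mxE mulrBl. Qed.

Lemma mulmx_tr_dotp m k (a : 'rV[R]_m) (A : 'M[R]_(k, m)) i :
  (a *m A^T) 0 i = dotp a (row i A).
Proof. by rewrite mxE; apply: eq_bigr => j _; rewrite !mxE. Qed.

(* Lagrange's identity: 2 (|x|^2 |y|^2 - <x, y>^2) = sum_{i,j} (x_i y_j - x_j y_i)^2. *)
Lemma dotp_sqr_le m (x y : 'rV[R]_m) : dotp x y ^+ 2 <= dotp x x * dotp y y.
Proof.
pose sq i j := (x 0 i * y 0 j - x 0 j * y 0 i) ^+ 2.
have sq_ge0 : 0 <= \sum_i \sum_j sq i j.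
  by do 2![apply: sumr_ge0 => ? _]; exact: sqr_ge0.
have xxyy : dotp x x * dotp y y = \sum_i \sum_j (x 0 i * x 0 i * (y 0 j * y 0 j)).
  by rewrite mulr_suml; apply: eq_bigr => i _; rewrite mulr_sumr.
have yyxx : dotp x x * dotp y y = \sum_i \sum_j (x 0 j * x 0 j * (y 0 i * y 0 i)).
  rewrite mulrC mulr_suml; apply: eq_bigr => i _; rewrite mulr_sumr.
  by apply: eq_bigr => j _; rewrite mulrC.
have xy2 : dotp x y ^+ 2 = \sum_i \sum_j (x 0 i * y 0 i * (x 0 j * y 0 j)).
  by rewrite expr2 mulr_suml; apply: eq_bigr => i _; rewrite mulr_sumr.
suff : \sum_i \sum_j sq i j = dotp x x * dotp y y + dotp x x * dotp y y
                                - 2 * dotp x y ^+ 2 by lra.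
rewrite {1}xxyy yyxx xy2 mulr_sumr -big_split -sumrB /=; apply: eq_bigr => i _.
by rewrite mulr_sumr -big_split -sumrB /=; apply: eq_bigr => j _; rewrite /sq; ring.
Qed.

Lemma norm_dotp_le m (x y : 'rV[R]_m) : `|dotp x y| <= enorm x * enorm y.
Proof.
rewrite /enorm -sqrtrM ?dotp_ge0 // -sqrtr_sqr ler_sqrt ?dotp_sqr_le //.
by rewrite mulr_ge0 ?dotp_ge0.
Qed.

Lemma enorm_eq0 m (x : 'rV[R]_m) : enorm x = 0 -> x = 0.
Proof.
move/eqP; rewrite sqrtr_eq0 => xx_le0; apply/rowP => j; rewrite mxE.
have : dotp x x == 0 by rewrite eq_le xx_le0 dotp_ge0.
rewrite psumr_eq0 => [/allP/(_ j (mem_index_enum j))|i _]; last first.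
  by rewrite -expr2 sqr_ge0.
by rewrite /= mulf_eq0 orbb => /eqP.
Qed.

End Dot.

Section VectorSequence.
Variables (R : realType) (n : nat) (z : nat -> 'rV[R]_n.+1).

Lemma dotp_last0 (u x : 'rV[R]_n.+1) :
  u 0 ord_max = 0 -> dotp u x = dotp (ul u) (ul x).
Proof.
move=> u_max; rewrite /dotp big_ord_recr /= u_max mul0r addr0.
by apply: eq_bigr => i _; rewrite !mxE.
Qed.

Lemma norm_Lf_sub_le (a b x : 'rV[R]_n.+1) :
  on_pi a -> on_pi b -> `|Lf a x - Lf b x| <= enorm (a - b) * enorm (ul x).
Proof.
move=> a_pi b_pi.
have ab_max : (a - b) 0 ord_max = 0 by rewrite !mxE a_pi b_pi subrr.
rewrite /Lf -dotpBl (dotp_last0 x ab_max) /enorm (dotp_last0 _ ab_max).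
exact: norm_dotp_le.
Qed.

Lemma detLam_square k : detLam z k n = `|\det (ulmx z k n)|.
Proof. by rewrite /detLam det_mulmx det_tr -expr2 sqrtr_sqr. Qed.

Lemma cofactor0_max_rows k :
  cofactor (\matrix_(i < n.+1) z (k + i)) ord0 ord_max
  = (-1) ^+ n * \det (ulmx z k.+1 n).
Proof.
rewrite /cofactor add0n; congr (_ * \det _); apply/matrixP => i j; rewrite !mxE.
rewrite lift0 addnS -addSn; congr (z _ 0 _); apply: val_inj.
by rewrite /= /bump leqNgt ltn_ord.
Qed.

Lemma enorm_ul_neq0 k : (0 < n)%N ->
  \det (ulmx z k n) != 0 -> enorm (ul (z k)) != 0.
Proof.
move=> n_gt0; apply: contra_neq => /enorm_eq0 ul0.
rewrite (expand_det_row _ (Ordinal n_gt0)) big1 // => j _.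
by rewrite mxE /= addn0 ul0 mxE mul0r.
Qed.

Lemma Dkl_Bk_expr_inv k l : enorm (ul (z k.+1)) != 0 ->
  (Dkl z k.+1 l * Bk z k ^+ l)^-1 = enorm (ul (z k)) ^+ l / detLam z k.+1 l.
Proof.
by move=> N_neq0; rewrite /Dkl /Bk expr_div_n mulrA divfK ?expf_neq0 // invf_div.
Qed.

Lemma Rk_mul_enorm k : enorm (ul (z k.+1)) != 0 ->
  Rk z k.+1 * enorm (ul (z k)) = (2 * Bk z k * Bk z k.+1)^-1 / detLam z k.+1 n.
Proof.
move=> N_neq0; rewrite /Rk /Bk.
set N := enorm (ul (z k)); set N' := enorm (ul (z k.+1)).
set N'' := enorm (ul (z k.+2)).
rewrite -[2 * (N' / N) * _]mulrA.
have -> : N' / N * (N'' / N') = N'' / N by rewrite mulrC mulrA divfK.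
by rewrite !invfM invrK; ring.
Qed.

End VectorSequence.

Lemma norm_Lf_alpha_detLam (R : realType) n (zi : nat -> 'rV[int]_n.+1)
    (a2 : 'rV[R]_n.+1) :
  Zbasis zi -> is_alpha (zR R zi) 2 a2 ->
  `|Lf a2 (zR R zi 1)| * detLam (zR R zi) 2 n = 1.
Proof.
move=> zi_basis [a2_pi a2_orth]; set z := zR R zi.
pose Z := \matrix_(i < n.+1) z (1 + i)%N.
have detZ : `|\det Z| = 1.
  rewrite -(unitmx_norm_det_intr R zi_basis); congr `|\det _|.
  by apply/matrixP => i j; rewrite !mxE.
have Z_orth i : i != ord0 -> (a2 *m Z^T) 0 i = 0.
  rewrite mulmx_tr_dotp rowK; case: i => [[|i] //= lt_i _].
  exact: (a2_orth (@Ordinal n i lt_i)).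
rewrite -detZ (det_cofactor_orthogonal a2_pi Z_orth) cofactor0_max_rows.
by rewrite normrM normrMsign mulrC mulmx_tr_dotp rowK detLam_square.
Qed.

Theorem lemma2 (R : realType) (n : nat) (zi : nat -> 'rV[int]_n.+1) :
  (1 <= n)%N ->
  Zbasis zi ->
  let z := zR R zi in
  alpha_wd z 2%N ->
  forall a2 : 'rV[R]_n.+1, is_alpha z 2%N a2 ->
  forall a : 'rV[R]_n.+1, in_frakS z 2%N a2 a ->
  let c := (Dkl z 2%N n * Bk z 1%N ^+ n)^-1 in
  c * (1 - (2 * Bk z 1%N * Bk z 2%N)^-1)
    <= `|Lf a (z 1%N)| * enorm (ul (z 1%N)) ^+ n
    <= c * (1 + (2 * Bk z 1%N * Bk z 2%N)^-1).
Proof.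
move=> n_gt0 zi_basis z _ a2 a2_alpha a [a_pi a_near]; lazy zeta.
have [a2_pi _] := a2_alpha.
have L2D := norm_Lf_alpha_detLam zi_basis a2_alpha.
set D := detLam z 2 n in L2D *; set e := (2 * _ * _)^-1.
have D_neq0 : D != 0.
  by apply/eqP => D0; move: L2D; rewrite D0 mulr0 => /esym/eqP; rewrite oner_eq0.
have N2_neq0 : enorm (ul (z 2)) != 0.
  by apply: enorm_ul_neq0 n_gt0 _; rewrite -normr_eq0 -detLam_square.
have L2 : `|Lf a2 (z 1)| = D^-1 by rewrite -[LHS](mulfK D_neq0) L2D mul1r.
have near : `|Lf a (z 1) - Lf a2 (z 1)| <= e / D.
  rewrite -Rk_mul_enorm //; apply: le_trans (norm_Lf_sub_le _ a_pi a2_pi) _.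
  by apply: ler_wpM2r a_near; exact: sqrtr_ge0.
have /andP[lo hi] : D^-1 - e / D <= `|Lf a (z 1)| <= D^-1 + e / D.
  by rewrite -ler_distl -{1}L2; exact: le_trans (ler_dist_dist _ _) near.
have P_ge0 : 0 <= enorm (ul (z 1)) ^+ n by rewrite exprn_ge0 ?sqrtr_ge0.
by rewrite Dkl_Bk_expr_inv //; apply/andP; split; nra.
Qed.
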